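(* Fix an iteration index $k$ and a current policy $\pi_k$. Assume that for $\rho_{\mathcal Q}$-almost every $q$ we have $0<\mu_{\pi_k}(q)<1$ (so that $\tilde\sigma_k(q)>0$). Then for every policy $\pi$, \[ \mathbb{E}_{q\sim\rho_{\mathcal Q}}\bigl[p_{\pi}(q)-p_{\pi_k}(q)\bigr] \;\ge\; \mathbb{E}_{q\sim\rho_{\mathcal Q}}\bigl[\tilde L_{\pi_k}(\pi(\cdot\mid q))\bigr] -2\sqrt{\mathbb{E}_{q\sim\rho_{\mathcal Q}}\Bigl(\tfrac{1-\rho^+(q)-\rho^-(q)-\tilde\sigma_k(q)}{\tilde\sigma_k(q)}\Bigr)^2}\; \sqrt{\mathbb{E}_{q\sim\rho_{\mathcal Q}}\mathrm{TV}^2\bigl(\pi(\cdot\mid q)\,\|\,\pi_k(\cdot\mid q)\bigr)}. \]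
   Context: Setting: $\mathcal Q$ is a set of prompts with a probability distribution $\rho_{\mathcal Q}$; $\mathcal O$ is a countable set of responses; $r^*:\mathcal Q\times\mathcal O\to\{0,1\}$ is the true (binary) reward. A policy $\pi$ assigns to each $q$ a probability distribution $\pi(\cdot\mid q)$ on $\mathcal O$. The success probability is $p_\pi(q)=\mathbb E_{o\sim\pi(\cdot\mid q)}[r^*(q,o)]$. $\mathrm{TV}(P,Q)=\sup_A|P(A)-Q(A)|$ is the total variation distance. Noise model: for each $q$ there are flip rates $\rho^+(q),\rho^-(q)\in[0,1]$; with $\xi\sim U[0,1]$ independent of $(q,o)$, the observed reward is $\tilde r(q,o,\xi)=(1-r^*(q,o))\mathbf 1_{\{\xi\le\rho^+(q)\}}+r^*(q,o)\mathbf 1_{\{\xi\le 1-\rho^-(q)\}}$. Define $\mu_{\pi_k}(q)=\rho^+(q)+(1-\rho^+(q)-\rho^-(q))\,p_{\pi_k}(q)$ and $\tilde\sigma_k(q)=\sqrt{\mu_{\pi_k}(q)(1-\mu_{\pi_k}(q))}$ (the mean and standard deviation of $\tilde r$ under $o\sim\pi_k(\cdot\mid q)$, $\xi\sim U[0,1]$). The noisy surrogate is \[ \tilde L_{\pi_k}(\pi(\cdot\mid q))=\frac{\mathbb E_{\xi,o\sim\pi(\cdot\mid q)}[\tilde r(q,o,\xi)]-\mathbb E_{\xi,o\sim\pi_k(\cdot\mid q)}[\tilde r(q,o,\xi)]}{\tilde\sigma_k(q)}=\frac{(1-\rho^+(q)-\rho^-(q))\,(p_\pi(q)-p_{\pi_k}(q))}{\tilde\sigma_k(q)}.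 \] *)

From HB Require Import structures.
From mathcomp Require Import all_boot all_order all_algebra.
From mathcomp Require Import all_classical all_reals all_analysis.
Set Implicit Arguments. Unset Strict Implicit. Unset Printing Implicit Defensive.
Import Order.TTheory GRing.Theory Num.Theory.
Local Open Scope classical_set_scope.
Local Open Scope ring_scope.

Section Defs.
Context (R : realType) (dQ dO : measure_display)
  (Q : measurableType dQ) (O : measurableType dO).

Definition succ_prob (rstar : Q -> O -> bool) (pi : Q -> {measure set O -> \bar R})
  (q : Q) : R :=
  fine (\int[pi q]_o ((rstar q o)%:R)%:E)%E.

Definition mu_noisy (rp rm : Q -> R) (rstar : Q -> O -> bool)
  (pik : Q -> {measure set O -> \bar R}) (q : Q) : R :=
  rp q + (1 - rp q - rm q) * succ_prob rstar pik q.

Definition sigma_noisy (rp rm : Q -> R) (rstar : Q -> O -> bool)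
  (pik : Q -> {measure set O -> \bar R}) (q : Q) : R :=
  Num.sqrt (mu_noisy rp rm rstar pik q * (1 - mu_noisy rp rm rstar pik q)).

Definition L_noisy (rp rm : Q -> R) (rstar : Q -> O -> bool)
  (pik pi : Q -> {measure set O -> \bar R}) (q : Q) : R :=
  (1 - rp q - rm q) * (succ_prob rstar pi q - succ_prob rstar pik q)
  / sigma_noisy rp rm rstar pik q.

Definition TV (m1 m2 : set O -> \bar R) : \bar R :=
  (ereal_sup [set `|m1 A - m2 A| | A in [set A | measurable A]])%E.

End Defs.

From HB Require Import structures.
From mathcomp Require Import all_boot all_order all_algebra.
From mathcomp Require Import all_classical all_reals all_analysis.
From mathcomp Require Import measurable_realfun.
From mathcomp Require Import ring lra.
Import Order.TTheory GRing.Theory Num.Theory.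
Local Open Scope classical_set_scope.
Local Open Scope ring_scope.

(* Write d := p_pi - p_pik, c := 1 - rho+ - rho- and s := sigma~_k.  Wherever
   0 < mu < 1 the surrogate is c d / s = d + d (c - s) / s, so the gap between
   the expected surrogate and the expected improvement is the integral of
   d (c - s) / s.  Cauchy-Schwarz bounds it by the L2 norms of d and of
   (c - s) / s, and |d| is the discrepancy of pi and pi_k on the success set
   {o | r*(q, o)}, hence at most TV(pi(.|q), pi_k(.|q)). *)

Lemma measurable_invr (R : realType) : measurable_fun [set: R] GRing.inv.
Proof.
have -> : [set: R] = ~` [set 0] `|` [set 0].
  by apply/seteqP; split=> x //= _; case: (eqVneq x 0) => [->|/eqP]; [right|left].
apply/measurable_funU => //; first exact: measurableC.
split; last exact: measurable_fun_set1.
apply: open_continuous_measurable_fun.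
  by rewrite openC; apply/accessible_closed_set1/hausdorff_accessible/Rhausdorff.
by move=> x; rewrite inE /= => /eqP x0; exact: inv_continuous.
Qed.

Section integral_lemmas.
Local Open Scope ereal_scope.
Context {d} {T : measurableType d} {R : realType} (mu : {measure set T -> \bar R}).

(* Unlike [ge0_le_integral], no measurability is needed: the integral of a
   nonnegative function is a supremum over simple functions below it. *)
Lemma ge0_le_integral_nonmeas (f g : T -> \bar R) :
  (forall x, 0 <= f x) -> (forall x, f x <= g x) ->
  \int[mu]_x f x <= \int[mu]_x g x.
Proof.
move=> f0 fg; rewrite !ge0_integralTE//; last by move=> x; exact: le_trans (fg x).
apply: ereal_sup_le => _ [h hf <-]; exists h => //= x; exact: le_trans (hf x) (fg x).
Qed.

Lemma Lnorm2E (f : T -> R) :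
  'N[mu]_2%:E[EFin \o f] = sqrte (\int[mu]_x (f x ^+ 2)%:E).
Proof.
rewrite unlock poweR12_sqrt; last by apply: integral_ge0 => x _; exact: poweR_ge0.
by congr sqrte; apply: eq_integral => x _ /=; rewrite powR_mulrn// real_normK// num_real.
Qed.

Lemma cauchy_schwarz_integral {f g : T -> R} :
  measurable_fun [set: T] f -> measurable_fun [set: T] g ->
  \int[mu]_x `|f x * g x|%:E <=
  sqrte (\int[mu]_x (f x ^+ 2)%:E) * sqrte (\int[mu]_x (g x ^+ 2)%:E).
Proof.
move=> mf mg; rewrite -!Lnorm2E.
have := @hoelder _ _ _ mu f g 2 2 mf mg ltac:(by []) ltac:(by []) ltac:(by field).
by rewrite Lnorm1; under eq_integral do rewrite /= -abse_EFin.
Qed.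

Lemma integralD_subr_le (f g : T -> R) (K : \bar R) :
  mu.-integrable [set: T] (EFin \o f) -> measurable_fun [set: T] g ->
  \int[mu]_x `|g x|%:E <= K ->
  \int[mu]_x (f x + g x)%:E - K <= \int[mu]_x (f x)%:E.
Proof.
move=> intf mg gK; have [Kfin|] := boolP (K \is a fin_num); last first.
  have K0 : 0 <= K by apply: le_trans gK; exact: integral_ge0.
  by rewrite ge0_fin_numE// -leNgt leye_eq => /eqP->; rewrite addeNy leNye.
have ig : mu.-integrable [set: T] (EFin \o g).
  apply/integrableP; split; first exact/measurable_EFinP.
  by apply: le_lt_trans gK _; rewrite ltey_eq Kfin.
under eq_integral do rewrite EFinD.
rewrite integralD// leeBlDr// leeD2l//.
apply: le_trans (lee_abs _) (le_trans _ gK).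
by apply: le_abse_integral => //; exact/measurable_EFinP.
Qed.

End integral_lemmas.

Section success_probability.
Context (R : realType) (dQ dO : measure_display)
  (Q : measurableType dQ) (O : measurableType dO) (rstar : Q -> O -> bool).
Hypothesis rstar_meas : measurable [set x : Q * O | rstar x.1 x.2].

Let success q := xsection [set x : Q * O | rstar x.1 x.2] q.

Let measurable_success q : measurable (success q).
Proof. exact: measurable_xsection. Qed.

Lemma succ_prob_EFin (k : R.-pker Q ~> O) q :
  (succ_prob rstar k q)%:E = k q (success q).
Proof.
rewrite /succ_prob.
have -> : (\int[k q]_o ((rstar q o)%:R)%:E = \int[k q]_o (\1_(success q) o)%:E)%E.
  apply: eq_integral => o _; rewrite indicE /success /xsection.
  by congr (_%:R)%:E; congr nat_of_bool; apply/idP/idP; rewrite in_setE /= in_setE.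
rewrite integral_indic// setIT fineK// ge0_fin_numE// (le_lt_trans _ (ltey 1%E))//.
by rewrite -(prob_kernel (s:=k) q); apply: le_measure; rewrite ?inE.
Qed.

Lemma succ_prob_itv (k : R.-pker Q ~> O) q : 0 <= succ_prob rstar k q <= 1.
Proof.
rewrite -!lee_fin succ_prob_EFin measure_ge0 -(prob_kernel (s:=k) q).
by apply: le_measure; rewrite ?inE.
Qed.

Lemma measurable_succ_prob (k : R.-pker Q ~> O) :
  measurable_fun [set: Q] (succ_prob rstar k).
Proof.
have -> : succ_prob rstar k = fine \o (fun q => k q (success q)).
  by apply/funext => q /=; rewrite -succ_prob_EFin.
apply: measurableT_comp; first exact: fine_measurable.
exact: measurable_fun_xsection_finite_kernel (mem_set rstar_meas).
Qed.

Lemma norm_succ_prob_diff_le_TV (pi pi' : R.-pker Q ~> O) q :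
  (`|succ_prob rstar pi q - succ_prob rstar pi' q|%:E <= TV (pi q) (pi' q))%E.
Proof.
apply: ereal_sup_ubound; exists (success q) => //=.
by rewrite -!succ_prob_EFin -EFinB.
Qed.

Lemma norm_succ_prob_diff_le1 (pi pi' : R.-pker Q ~> O) q :
  `|succ_prob rstar pi q - succ_prob rstar pi' q| <= 1.
Proof.
have /andP[p0 p1] := succ_prob_itv pi q; have /andP[p0' p1'] := succ_prob_itv pi' q.
by rewrite ler_norml; apply/andP; split; lra.
Qed.

Lemma integral_sqr_succ_prob_diff_le_TV (mu : {measure set Q -> \bar R})
    (pi pi' : R.-pker Q ~> O) :
  (\int[mu]_q ((succ_prob rstar pi q - succ_prob rstar pi' q) ^+ 2)%:E
   <= \int[mu]_q TV (pi q) (pi' q) ^+ 2)%E.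
Proof.
apply: ge0_le_integral_nonmeas => q; first by rewrite lee_fin sqr_ge0.
have TVd := norm_succ_prob_diff_le_TV pi pi' q.
rewrite -real_normK ?num_real// EFin_expe lee_sqr//.
exact: le_trans TVd.
Qed.

End success_probability.

Section noisy_surrogate.
Context (R : realType) (dQ dO : measure_display)
  (Q : measurableType dQ) (O : measurableType dO) (rstar : Q -> O -> bool)
  (rp rm : Q -> R) (pik pi : R.-pker Q ~> O).

Local Notation s := (sigma_noisy rp rm rstar pik).

Lemma L_noisyE q : 0 < mu_noisy rp rm rstar pik q < 1 ->
  L_noisy rp rm rstar pik pi q =
  (succ_prob rstar pi q - succ_prob rstar pik q)
  * (1 + (1 - rp q - rm q - s q) / s q).
Proof.
move=> /andP[mu0 mu1]; have s0 : s q != 0.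
  by rewrite gt_eqF// sqrtr_gt0 mulr_gt0// subr_gt0.
by rewrite /L_noisy; field.
Qed.

Hypotheses (rstar_meas : measurable [set x : Q * O | rstar x.1 x.2])
  (rp_meas : measurable_fun [set: Q] rp) (rm_meas : measurable_fun [set: Q] rm).

Lemma measurable_sigma_noisy : measurable_fun [set: Q] s.
Proof.
apply: measurableT_comp (continuous_measurable_fun (@sqrt_continuous R)) _.
have mmu : measurable_fun [set: Q] (mu_noisy rp rm rstar pik).
  apply: measurable_funD => //; apply: measurable_funM; last exact: measurable_succ_prob.
  by apply: measurable_funB => //; exact: measurable_funB.
by apply: measurable_funM => //; exact: measurable_funB.
Qed.

Lemma measurable_L_noisy : measurable_fun [set: Q] (L_noisy rp rm rstar pik pi).
Proof.
apply: measurable_funM; last exact: measurableT_comp (measurable_invr R) measurable_sigma_noisy.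
apply: measurable_funM; first by apply: measurable_funB => //; exact: measurable_funB.
by apply: measurable_funB; exact: measurable_succ_prob.
Qed.

End noisy_surrogate.

Theorem theorem3 (R : realType) (dQ dO : measure_display)
  (Q : measurableType dQ) (O : measurableType dO)
  (rhoQ : probability Q R)
  (O_countable : countable [set: O])
  (O_discrete : forall A : set O, measurable A)
  (rstar : Q -> O -> bool)
  (rstar_meas : measurable [set x : Q * O | rstar x.1 x.2])
  (rp rm : Q -> R)
  (rp_meas : measurable_fun [set: Q] rp) (rm_meas : measurable_fun [set: Q] rm)
  (rp01 : forall q, 0 <= rp q <= 1) (rm01 : forall q, 0 <= rm q <= 1)
  (pik : R.-pker Q ~> O)
  (hmu : {ae rhoQ, forall q, 0 < mu_noisy rp rm rstar pik q < 1}) :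
  forall pi : R.-pker Q ~> O,
  (\int[rhoQ]_q (L_noisy rp rm rstar pik pi q)%:E
     - 2%:E * sqrte (\int[rhoQ]_q
                (((1 - rp q - rm q - sigma_noisy rp rm rstar pik q)
                  / sigma_noisy rp rm rstar pik q) ^+ 2)%:E)
            * sqrte (\int[rhoQ]_q (TV (pi q) (pik q)) ^+ 2)
   <= \int[rhoQ]_q (succ_prob rstar pi q - succ_prob rstar pik q)%:E)%E.
Proof.
move=> pi.
set d := fun q => succ_prob rstar pi q - succ_prob rstar pik q.
set s := sigma_noisy rp rm rstar pik.
set X := fun q => (1 - rp q - rm q - s q) / s q.
have md : measurable_fun [set: Q] d by apply: measurable_funB; exact: measurable_succ_prob.
have ms : measurable_fun [set: Q] s by exact: measurable_sigma_noisy.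
have mX : measurable_fun [set: Q] X.
  apply: measurable_funM; last exact: measurableT_comp (measurable_invr R) ms.
  by apply: measurable_funB => //; do 2 apply: measurable_funB => //.
have -> : (\int[rhoQ]_q (L_noisy rp rm rstar pik pi q)%:E
           = \int[rhoQ]_q (d q + d q * X q)%:E)%E.
  apply: ae_eq_integral => //.
  - exact/measurable_EFinP/measurable_L_noisy.
  - exact/measurable_EFinP/measurable_funD/measurable_funM.
  - by apply: filterS hmu => q /L_noisyE-> _; rewrite mulrDr mulr1.
have hP : (rhoQ [set: Q] < +oo)%E.
  exact: le_lt_trans (probability_le1 rhoQ measurableT) (ltey _).
apply: integralD_subr_le; [|exact: measurable_funM|].
  apply: measurable_bounded_integrable => //; exists 1; split=> // M M1 q _.
  by apply: le_trans (ltW M1); apply: norm_succ_prob_diff_le1.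
apply: le_trans (cauchy_schwarz_integral rhoQ md mX) _.
(* The factor 2 is slack: |d| <= TV already gives the bound with constant 1. *)
rewrite muleAC; apply: lee_wpmul2r; first exact: sqrte_ge0.
apply: le_trans (lee_pemull (sqrte_ge0 _) _); last by rewrite lee_fin ler1n.
rewrite lee_sqrt ?integral_sqr_succ_prob_diff_le_TV//.
by apply: integral_ge0 => q _; exact: sqre_ge0.
Qed.
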